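(* Let $1\le p<q$ and $u=0^{q-p}1^p$. Then $$\mathcal{S}_{q-p}(u)=\sum_{j=1}^{q}\min(j-1,\;p,\;q-p,\;q+1-j)\,2^{q-j}.$$
   Context: For a word $x=x_1\cdots x_n$ over $\{0,1\}$, $(x)_2=\sum_{i=1}^n x_i2^{n-i}$. For $w\in\{0,1\}^q$, $\mathcal{O}_1(w)\le\dots\le\mathcal{O}_q(w)$ are the $q$ cyclic shifts $w,\sigma(w),\dots,\sigma^{q-1}(w)$ (where $\sigma(w_1\cdots w_n)=w_2\cdots w_nw_1$) sorted lexicographically with $0<1$, $\mathcal{I}_k(w)=(\mathcal{O}_k(w))_2$, and $\mathcal{S}_i(w)=\sum_{k=1}^i\mathcal{I}_k(w)$. *)

From mathcomp Require Import all_boot.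
Set Implicit Arguments. Unset Strict Implicit. Unset Printing Implicit Defensive.

(* Binary words are sequences of booleans (false = 0, true = 1). *)

Definition val2 (x : seq bool) : nat :=
  \sum_(i < size x) nth false x i * 2 ^ (size x - i.+1).

Fixpoint lexle (x y : seq bool) : bool :=
  match x, y with
  | [::], _ => true
  | _ :: _, [::] => false
  | a :: x', b :: y' => (a < b) || ((a == b) && lexle x' y')
  end.

(* sigma(w_1...w_n) = w_2...w_n w_1, i.e. rot 1; sigma^i = rot i *)
Definition shifts (w : seq bool) : seq (seq bool) :=
  [seq rot i w | i <- iota 0 (size w)].

Definition sortedShifts (w : seq bool) : seq (seq bool) := sort lexle (shifts w).

(* O_k(w), 1-indexed *)
Definition O_ (k : nat) (w : seq bool) : seq bool := nth [::] (sortedShifts w) k.-1.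

Definition I_ (k : nat) (w : seq bool) : nat := val2 (O_ k w).

Definition S_ (i : nat) (w : seq bool) : nat := \sum_(1 <= k < i.+1) I_ k w.

From mathcomp Require Import all_boot zify.

(* Write m = q - p and w = 0^m 1^p.  The m smallest rotations of w are those
   beginning with 0, namely 0^(m-i) 1^p 0^i for i < m, in increasing order of i;
   their values are (2^p - 1) 2^i, so S_m(w) = (2^p - 1)(2^m - 1).  The right-hand
   side is the same product expanded: min(j - 1, p, m, q + 1 - j) counts the
   pairs (a, b) with a < p, b < m and a + b = q - j. *)

Lemma lexle_trans : transitive lexle.
Proof.
move=> y x; elim: x y => [|a x IH] [|b y] [|c z] //=.
by case: a; case: b; case: c => //=; apply: IH.
Qed.

Lemma lexle_anti : antisymmetric lexle.
Proof.
elim=> [|a x IH] [|b y] //= /andP[].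
by case: a; case: b => //= lexy leyx; rewrite (IH y) // lexy leyx.
Qed.

Lemma lexle_total : total lexle.
Proof. by elim=> [|a x IH] [|b y] //=; case: a; case: b => //=; apply: IH. Qed.

Lemma lexle_cat2l s x y : lexle (s ++ x) (s ++ y) = lexle x y.
Proof. by elim: s => //= a s ->; rewrite ltnn eqxx. Qed.

Lemma lexle_head x y : head false x = false -> head false y = true -> lexle x y.
Proof. by case: x => [|[] x] //; case: y => [|[] y]. Qed.

Lemma val2_cons b x : val2 (b :: x) = b * 2 ^ size x + val2 x.
Proof. by rewrite /val2 big_ord_recl /= subn1. Qed.

Lemma val2_cat x y : val2 (x ++ y) = val2 x * 2 ^ size y + val2 y.
Proof.
elim: x => [|b x IH]; first by rewrite /val2 big_ord0.
by rewrite cat_cons !val2_cons IH size_cat expnD mulnDl mulnA addnA.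
Qed.

Lemma val2_nseq b k : val2 (nseq k b) = b * \sum_(i < k) 2 ^ i.
Proof.
elim: k => [|k IH]; first by rewrite big_ord0 muln0 /val2 big_ord0.
by rewrite /= val2_cons size_nseq IH big_ord_recr /= mulnDr addnC.
Qed.

Section ZerosOnes.

Variables m p : nat.

Local Notation w := (nseq m false ++ nseq p true).

Lemma rot_zeros_ones i : i < m ->
  rot i w = nseq (m - i) false ++ nseq p true ++ nseq i false.
Proof.
move=> lt_im; rewrite /rot drop_cat take_cat size_nseq lt_im.
by rewrite drop_nseq take_nseq ?(ltnW lt_im) // catA.
Qed.

Lemma head_rot_zeros_ones i : m <= i < m + p -> head false (rot i w) = true.
Proof.
move=> /andP[le_mi lt_i]; rewrite /rot drop_cat size_nseq ltnNge le_mi /= drop_nseq.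
by have -> : p - (i - m) = (p - (i - m)).-1.+1 by lia.
Qed.

Local Notation A := [seq rot i w | i <- iota 0 m].
Local Notation B := [seq rot i w | i <- iota m p].

Lemma sortedShifts_zeros_ones : 0 < p -> sortedShifts w = A ++ sort lexle B.
Proof.
move=> p_gt0; have sorted_A : sorted lexle A.
  apply/(sortedP [::]) => i; rewrite size_map size_iota => lt_i.
  rewrite !(nth_map 0) ?size_iota ?(ltnW lt_i) // !nth_iota ?(ltnW lt_i) //.
  rewrite !rot_zeros_ones ?(ltnW lt_i) // (_ : m - i = (m - i.+1) + 1); last by lia.
  by rewrite nseqD -catA lexle_cat2l -(prednK p_gt0).
have A_le_B : allrel lexle A (sort lexle B).
  apply/allrelP => x y /mapP[i]; rewrite mem_iota => /andP[_ lt_im] ->.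
  rewrite mem_sort => /mapP[j]; rewrite mem_iota => rng_j ->.
  apply: lexle_head; last exact: head_rot_zeros_ones.
  by rewrite rot_zeros_ones // (_ : m - i = (m - i).-1.+1); last by lia.
apply: (sorted_eq lexle_trans lexle_anti); first exact: (sort_sorted lexle_total).
  rewrite (sorted_pairwise lexle_trans) pairwise_cat A_le_B.
  by rewrite -!(sorted_pairwise lexle_trans) sorted_A (sort_sorted lexle_total).
rewrite /sortedShifts perm_sort /shifts size_cat !size_nseq iotaD map_cat.
by rewrite perm_cat2l perm_sym perm_sort.
Qed.

Lemma S_zeros_ones : 0 < p -> S_ m w = (\sum_(i < p) 2 ^ i) * (\sum_(i < m) 2 ^ i).
Proof.
move=> p_gt0; rewrite /S_ big_add1 /= big_mkord big_distrr /=.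
apply: eq_bigr => i _; rewrite /I_ /O_ sortedShifts_zeros_ones //= nth_cat.
rewrite size_map size_iota ltn_ord (nth_map 0) ?size_iota // nth_iota // add0n.
by rewrite rot_zeros_ones // !val2_cat !val2_nseq !size_nseq mul0n !add0n addn0 mul1n.
Qed.

End ZerosOnes.

(* The coefficient of [X^s] in [(1 + ... + X^(p-1)) * (1 + ... + X^(m-1))]. *)
Definition conv_coef (p m s : nat) : nat := minn (minn (p + m - 1 - s) p) (minn m s.+1).

Lemma conv_coefS p m s :
  conv_coef p m.+1 s = conv_coef p m s + (m <= s < p + m).
Proof. by rewrite /conv_coef; case: (leqP m s); case: (ltnP s (p + m)); lia. Qed.

Lemma sum_exp2_window p m :
  \sum_(s < (p + m).+1) (m <= s < p + m) * 2 ^ s = (\sum_(i < p) 2 ^ i) * 2 ^ m.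
Proof.
rewrite -(big_mkord xpredT (fun s => (m <= s < p + m) * 2 ^ s)).
rewrite (big_cat_nat (n := m)) 1?leqW ?leq_addl //=.
rewrite big_nat_recr ?leq_addl //= ltnn mul0n addn0.
rewrite big_nat_cond big1 ?add0n => [|s /andP[/andP[_ hs] _]]; last by rewrite leqNgt hs.
rewrite -{1}[m]add0n big_addn addnK big_mkord big_distrl /=.
by apply: eq_bigr => i _; rewrite leq_addl ltn_add2r ltn_ord mul1n expnD.
Qed.

Lemma sum_conv_coef p m :
  \sum_(s < p + m) conv_coef p m s * 2 ^ s = (\sum_(i < p) 2 ^ i) * (\sum_(i < m) 2 ^ i).
Proof.
elim: m => [|m IH].
  by rewrite big_ord0 muln0 big1 // => s _; rewrite /conv_coef min0n minn0.
have last0 : conv_coef p m (p + m) = 0 by rewrite /conv_coef; lia.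
under eq_bigr do rewrite conv_coefS mulnDl.
rewrite addnS big_split /= sum_exp2_window big_ord_recr /= last0 mul0n addn0 IH.
by rewrite big_ord_recr /= mulnDr.
Qed.

Theorem mainTheorem5 (p q : nat) (hp : 1 <= p) (hpq : p < q) :
  S_ (q - p) (nseq (q - p) false ++ nseq p true) =
  \sum_(1 <= j < q.+1) minn (minn (j - 1) p) (minn (q - p) (q + 1 - j)) * 2 ^ (q - j).
Proof.
set m := q - p; have -> : q = p + m by rewrite subnKC // ltnW.
rewrite S_zeros_ones // -sum_conv_coef big_nat_rev big_add1 /= big_mkord.
apply: eq_bigr => [[s lt_s]] _ /=; rewrite /conv_coef.
by congr (minn (minn _ _) (minn _ _) * 2 ^ _); lia.
Qed.
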